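(* For the discrete torus calculus and diagonal zweibein of the context, the antisymmetrizer $\pi=\frac12(\mathrm{id}-\tau)$ satisfies conditions (i) and (ii) (and hence defines 2-forms with $\mathrm{d}^2=0$) if and only if $\Theta_1\,R_1(\Theta_2)=\Theta_2\,R_2(\Theta_1)$, i.e. $\Theta_1\bar\partial^1\Theta_2=\Theta_2\bar\partial^2\Theta_1$.
   Context: $\Sigma=\mathbb{Z}_2\times\mathbb{Z}_2$, $x\to y$ iff $y-x\in\{(1,0),(0,1)\}$ (square connectivity), $n=2$, diagonal zweibein $e_{1,x,x+(1,0)}=\Theta_1(x)^{-1}$, $e_{2,x,x+(0,1)}=\Theta_2(x)^{-1}$ with $\Theta_a$ nowhere-vanishing, other entries $0$; inverses $e_1^{-1\,x,x+(1,0)}=\Theta_1(x)$, $e_2^{-1\,x,x+(0,1)}=\Theta_2(x)$. $R_1f(x)=f(x+(1,0))$, $R_2f(x)=f(x+(0,1))$, $\bar\partial^a=R_a-\mathrm{id}$. $F_{x,z}=\{y:x\to y\to z\}$. For $\pi(e_a\otimes e_b)=\sum\pi_{ab}{}^{cd}e_c\otimes e_d$ let $\pi_{x,z}{}^y{}_{y'}=\sum\pi_{ab}{}^{cd}e_a^{-1\,xy}e_b^{-1\,yz}e_{cxy'}e_{dy'z}$. Conditions: (i) $\sum\pi_{ab}{}^{cd}e_a^{-1\,xy}e_b^{-1\,yz}e_{cxy'}e_{dy'z'}=0$ for all $x$, $z\ne z'$, $y\in F_{x,z}$, $y'\in F_{x,z'}$; (ii) $\sum_{y\in F_{x,z}}\pi_{x,z}{}^y{}_{y'}=0$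 for all $(x,z)$ that are neither edges nor diagonal and all $y'\in F_{x,z}$. $\tau$ is the flip $e_a\otimes e_b\mapsto e_b\otimes e_a$. *)

From HB Require Import structures.
From mathcomp Require Import all_boot all_order all_algebra.
Set Implicit Arguments. Unset Strict Implicit. Unset Printing Implicit Defensive.
Import Order.TTheory GRing.Theory Num.Theory.
Local Open Scope ring_scope.

Definition Sigma : Type := ('Z_2 * 'Z_2)%type.

(* the two generating shifts (1,0) and (0,1); direction a : 'I_2,
   with a = 0 standing for direction 1 and a = 1 for direction 2 *)
Definition u1 : Sigma := (1%R, 0%R).
Definition u2 : Sigma := (0%R, 1%R).
Definition dir (a : 'I_2) : Sigma := if a == ord0 then u1 else u2.

Definition edge (x y : Sigma) : bool := (y - x == u1) || (y - x == u2).

Definition F (x z : Sigma) : {set Sigma} := [set y | edge x y && edge y z].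

Definition R1 {K : Type} (f : Sigma -> K) : Sigma -> K := fun x => f (x + u1).
Definition R2 {K : Type} (f : Sigma -> K) : Sigma -> K := fun x => f (x + u2).

Section Zweibein.
Variable K : numFieldType.
Variables Th1 Th2 : Sigma -> K.

Definition Th (a : 'I_2) : Sigma -> K := if a == ord0 then Th1 else Th2.

Definition zw (a : 'I_2) (x y : Sigma) : K :=
  if y - x == dir a then (Th a x)^-1 else 0.
Definition zwinv (a : 'I_2) (x y : Sigma) : K :=
  if y - x == dir a then Th a x else 0.

(* pi_{x,z}{}^y{}_{y'} (with a possibly different endpoint z' for the e's) *)
Definition picoef (pi : 'I_2 -> 'I_2 -> 'I_2 -> 'I_2 -> K)
    (x y z y' z' : Sigma) : K :=
  \sum_(a < 2) \sum_(b < 2) \sum_(c < 2) \sum_(d < 2)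
    pi a b c d * zwinv a x y * zwinv b y z * zw c x y' * zw d y' z'.

Definition cond_i (pi : 'I_2 -> 'I_2 -> 'I_2 -> 'I_2 -> K) : Prop :=
  forall x z z' y y' : Sigma, z != z' -> y \in F x z -> y' \in F x z' ->
    picoef pi x y z y' z' = 0.

Definition cond_ii (pi : 'I_2 -> 'I_2 -> 'I_2 -> 'I_2 -> K) : Prop :=
  forall x z : Sigma, ~~ edge x z -> z != x ->
    forall y', y' \in F x z -> \sum_(y in F x z) picoef pi x y z y' z = 0.
End Zweibein.

(* coefficients pi_{ab}^{cd} of pi = 1/2 (id - tau), tau the flip:
   pi (e_a (x) e_b) = sum_{cd} pi_{ab}^{cd} e_c (x) e_d *)
Definition antisym (K : numFieldType) (a b c d : 'I_2) : K :=
  2^-1 * (((a == c) && (b == d))%:R - ((a == d) && (b == c))%:R).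

From mathcomp Require Import all_boot all_order all_algebra.
From mathcomp Require Import ring.
Import GRing.Theory Num.Theory.
Local Open Scope ring_scope.

(* On Z_2 x Z_2 the sum of two steps only remembers whether they point in the
   same direction: it is 0 then, and (1,1) otherwise.  Hence the antisymmetrizer
   couples two two-step paths x -> y -> z and x -> y' -> z' only when z = z', so
   condition (i) always holds, and condition (ii) only concerns the diagonals
   (x, x + (1,1)).  There the sum over the two intermediate points is a nonzero
   multiple of Th1 x * R1 Th2 x - Th2 x * R2 Th1 x, the two paths entering with
   opposite signs. *)

Lemma eq_dir (a b : 'I_2) : (dir a == dir b) = (a == b).
Proof. by case: a => [[|[|]]//] ?; case: b => [[|[|]]//] ?. Qed.

Lemma dirDdiag (a : 'I_2) : dir a + dir a = 0.
Proof. by case: a => [[|[|]]//] ?; apply/eqP. Qed.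

Lemma dirDoffdiag (c d : 'I_2) : c != d -> dir c + dir d = u1 + u2.
Proof. by case: c => [[|[|]]//] ?; case: d => [[|[|]]//] ? _ //; rewrite addrC. Qed.

Lemma eq_dirD (a b c d : 'I_2) :
  (dir a + dir b == dir c + dir d) = ((a == b) == (c == d)).
Proof.
by case: a => [[|[|]]//] ?; case: b => [[|[|]]//] ?;
   case: c => [[|[|]]//] ?; case: d => [[|[|]]//] ?.
Qed.

Lemma edge_dir (x y : Sigma) : edge x y -> exists a, y = x + dir a.
Proof.
by case/orP=> /eqP h; [exists ord0 | exists (@Ordinal 2 1 isT)]; rewrite /dir /= -h addrC subrK.
Qed.

Lemma edge_addl (x v w : Sigma) : edge (x + v) (x + w) = edge v w.
Proof. by rewrite /edge opprD addrACA subrr add0r addrC. Qed.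

Lemma F_offdiag (x : Sigma) : F x (x + (u1 + u2)) = [set x + u1; x + u2].
Proof.
apply/setP => y; rewrite !inE -{1}(addr0 x) -(subrKC x y) !edge_addl.
rewrite !(inj_eq (addrI x)).
by case: (y - x) => [[[|[|]]//] ?] [[|[|]]//] ?.
Qed.

Lemma in_F_offdiag (x z y : Sigma) : y \in F x z -> z != x ->
  exists c d : 'I_2, [/\ c != d, y = x + dir c & z = x + (u1 + u2)].
Proof.
rewrite inE => /andP [/edge_dir [c ->] /edge_dir [d ->]] nzx.
have ncd : c != d.
  by apply: contra nzx => /eqP <-; rewrite -addrA dirDdiag addr0.
by exists c, d; rewrite -addrA dirDoffdiag.
Qed.

Lemma antisym_eq0 (K : numFieldType) (a b c d : 'I_2) :
  (a == b) != (c == d) -> antisym K a b c d = 0.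
Proof.
by case: a => [[|[|]]//] ?; case: b => [[|[|]]//] ?;
   case: c => [[|[|]]//] ?; case: d => [[|[|]]//] ? _; rewrite /antisym /= subrr mulr0.
Qed.

Section DiagonalZweibein.
Variables (K : numFieldType) (Th1 Th2 : Sigma -> K).
Local Notation picoef := (picoef Th1 Th2 (@antisym K)).
Local Notation Th := (Th Th1 Th2).

Lemma picoef_path {x y z y' z' : Sigma} {a b c d : 'I_2} :
  y = x + dir a -> z = y + dir b -> y' = x + dir c -> z' = y' + dir d ->
  picoef x y z y' z' =
  antisym K a b c d * Th a x * Th b y * (Th c x)^-1 * (Th d y')^-1.
Proof.
have addKl (u v : Sigma) : u + v - u = v by rewrite addrC addKr.
move=> -> -> -> ->; rewrite /picoef !big_ord_recr !big_ord0 /= !add0r /zw /zwinv.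
rewrite !addKl !eq_dir.
by case: a => [[|[|]]//] ?; case: b => [[|[|]]//] ?;
   case: c => [[|[|]]//] ?; case: d => [[|[|]]//] ?;
   rewrite /= ?mulr0 ?mul0r ?addr0 ?add0r.
Qed.

Lemma antisym_cond_i : cond_i Th1 Th2 (@antisym K).
Proof.
move=> x z z' y y' nzz'; rewrite !inE.
move=> /andP [/edge_dir [a ey] /edge_dir [b ez]] /andP [/edge_dir [c ey'] /edge_dir [d ez']].
rewrite (picoef_path ey ez ey' ez') antisym_eq0 ?mul0r // -eq_dirD.
by apply: contra nzz' => /eqP; rewrite ez ez' ey ey' -!addrA => ->.
Qed.

Hypotheses (Th1_neq0 : forall x, Th1 x != 0) (Th2_neq0 : forall x, Th2 x != 0).

Lemma offdiag_sum (x : Sigma) {c d : 'I_2} : c != d ->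
  exists2 k : K, k != 0 &
  \sum_(y in F x (x + (u1 + u2))) picoef x y (x + (u1 + u2)) (x + dir c) (x + (u1 + u2))
    = (Th1 x * R1 Th2 x - Th2 x * R2 Th1 x) * k.
Proof.
move=> ncd; rewrite F_offdiag big_setU1 ?big_set1 /=; last first.
  by rewrite inE (inj_eq (addrI x)).
have ez : x + (u1 + u2) = x + dir c + dir d by rewrite -addrA dirDoffdiag.
have ez1 : x + (u1 + u2) = x + u1 + u2 by rewrite addrA.
have ez2 : x + (u1 + u2) = x + u2 + u1 by rewrite (addrC u1) addrA.
rewrite (picoef_path (a := ord0) (b := Ordinal (isT : (1 < 2)%N)) (c := c) _ ez1 _ ez) //.
rewrite (picoef_path (a := Ordinal (isT : (1 < 2)%N)) (b := ord0) (c := c) _ ez2 _ ez) //.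
have two_neq0 : (2 : K) != 0 by rewrite pnatr_eq0.
move: ez ncd; case: c => [[|[|]]//] ?; case: d => [[|[|]]//] ? _ _;
  rewrite /antisym /Th /dir /R1 /R2 /=.
- exists (2^-1 * (Th1 x)^-1 * (Th2 (x + u1))^-1).
    by rewrite !mulf_neq0 ?invr_eq0.
  by field; rewrite ?Th1_neq0 ?Th2_neq0.
- exists (- (2^-1 * (Th2 x)^-1 * (Th1 (x + u2))^-1)).
    by rewrite oppr_eq0 !mulf_neq0 ?invr_eq0.
  by field; rewrite ?Th1_neq0 ?Th2_neq0.
Qed.

Lemma antisym_cond_iiP : cond_ii Th1 Th2 (@antisym K) <->
  (forall x, Th1 x * R1 Th2 x = Th2 x * R2 Th1 x).
Proof.
split=> [cond x | flat x z _ nzx y' /in_F_offdiag /(_ nzx) [c [d [ncd -> ->]]]].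
  have [k nzk] := offdiag_sum x (isT : ord0 != Ordinal (isT : (1 < 2)%N)).
  have nzx : x + (u1 + u2) != x by rewrite -subr_eq0 addrC addKr.
  have u1_in : x + u1 \in F x (x + (u1 + u2)) by rewrite F_offdiag !inE eqxx.
  rewrite (cond x _ _ nzx _ u1_in); last by rewrite -{1}(addr0 x) edge_addl.
  by move/esym/eqP; rewrite mulf_eq0 (negbTE nzk) orbF subr_eq0 => /eqP.
have [k _ ->] := offdiag_sum x ncd.
by rewrite flat subrr mul0r.
Qed.
End DiagonalZweibein.

Theorem mainTheorem10 (K : numFieldType) (Th1 Th2 : Sigma -> K)
  (H1 : forall x, Th1 x != 0) (H2 : forall x, Th2 x != 0) :
  (cond_i Th1 Th2 (@antisym K) /\ cond_ii Th1 Th2 (@antisym K)) <->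
  (forall x : Sigma, Th1 x * R1 Th2 x = Th2 x * R2 Th1 x).
Proof.
rewrite -(@antisym_cond_iiP K Th1 Th2 H1 H2).
by split=> [[] // | cond_ii]; split=> //; apply: antisym_cond_i.
Qed.
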